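(* Let $G$ be an $r$-graph, fix a residue $k$ modulo $r$, and let $\mathbf x,\mathbf y\in\vec E(G)$. There is a tight walk from $\mathbf x$ to $\mathbf y$ of stretch congruent to $k$ modulo $r$ if and only if $\mathbf x$ is tightly connected to $\mathrm{cyc}^k(\mathbf y)$, where $\mathrm{cyc}(x_1\cdots x_r)=x_rx_1\cdots x_{r-1}$.
   Context: An $r$-graph is an $r$-uniform hypergraph. An oriented edge is an ordered $r$-tuple $x_1\cdots x_r$ of vertices whose underlying set is an edge of $G$; $\vec E(G)$ is the set of oriented edges. $\mathbf x,\mathbf y\in\vec E(G)$ are tightly connected if there is a sequence $\mathbf x=\mathbf z^{(0)},\dots,\mathbf z^{(s)}=\mathbf y$ of oriented edges such that consecutive terms differ in at most one coordinate. A tight walk of stretch $\ell$ is a sequence $v_1\cdots v_{\ell+r}$ of (not necessarily distinct) vertices with $v_{i+1}\cdots v_{i+r}\in\vec E(G)$ for each $0\le i\le\ell$; it goes from $v_1\cdots v_r$ to $v_{\ell+1}\cdots v_{\ell+r}$. *)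

From mathcomp Require Import all_boot.
Set Implicit Arguments. Unset Strict Implicit. Unset Printing Implicit Defensive.

Definition is_rgraph (V : finType) (r : nat) (E : {set {set V}}) : Prop :=
  forall e, e \in E -> #|e| = r.

Definition oedge (V : finType) (r : nat) (E : {set {set V}}) (x : seq V) : bool :=
  (size x == r) && ([set v in x] \in E).

Definition differ_le1 (V : finType) (x y : seq V) : bool :=
  (size x == size y) && (count (fun p => p.1 != p.2) (zip x y) <= 1).

Definition tightly_connected (V : finType) (r : nat) (E : {set {set V}})
    (x y : seq V) : Prop :=
  exists p : seq (seq V),
    [/\ all (oedge r E) (x :: p),
        path (fun a b => differ_le1 a b) x p
      & last x p = y].

Definition tight_walk (V : finType) (r : nat) (E : {set {set V}})
    (l : nat) (x y : seq V) : Prop :=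
  exists s : seq V,
    [/\ size s = l + r,
        forall i, i <= l -> oedge r E (take r (drop i s)),
        take r s = x
      & take r (drop l s) = y].

Definition cyc (V : Type) (x : seq V) : seq V := rotr 1 x.

From mathcomp Require Import all_boot.

(* Two consecutive windows w_i, w_(i+1) of a tight walk are such that w_i and
   cyc(w_(i+1)) differ only in their first entry; since cyc preserves tight
   connectivity, cyc^i(w_i) is tightly connected to cyc^(i+1)(w_(i+1)), so a walk
   of stretch l from x to y connects x to cyc^l(y). Conversely, if a and b differ
   in at most one coordinate, every window of the walk a ++ b (of stretch r) is a
   rotation of a or of b; and cyc^k(y) walks to y with stretch k. As cyc^r is the
   identity on r-tuples, only the stretch modulo r matters. *)

Set Implicit Arguments.
Unset Strict Implicit.
Unset Printing Implicit Defensive.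

Section Cyc.
Variable T : Type.
Implicit Types s p q : seq T.

Lemma size_iter_cyc n s : size (iter n (@cyc T) s) = size s.
Proof. by elim: n => //= n IHn; rewrite size_rotr. Qed.

Lemma iter_cyc_size_cat q p : iter (size p) (@cyc T) (q ++ p) = p ++ q.
Proof.
elim/last_ind: p q => [|p v IHp] q; first by rewrite cats0.
by rewrite size_rcons iterSr /cyc -rcons_cat rotr1_rcons (IHp (v :: q)) cat_rcons.
Qed.

Lemma iter_cyc_size s : iter (size s) (@cyc T) s = s.
Proof. by rewrite -[s in iter _ _ s]cat0s iter_cyc_size_cat cats0. Qed.

Lemma iter_cyc_mod n s : iter n (@cyc T) s = iter (n %% size s) (@cyc T) s.
Proof.
rewrite {1}(divn_eq n (size s)) iterD iterM iter_fix //.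
by rewrite -[in iter (size s)](size_iter_cyc (n %% size s)) iter_cyc_size.
Qed.

End Cyc.

Section Windows.
Variable T : Type.
Implicit Types s t : seq T.

Lemma take_drop_catl n i s t :
  i + n <= size s -> take n (drop i (s ++ t)) = take n (drop i s).
Proof.
move=> le_s; rewrite drop_cat; case: ltnP => [lt_i | ge_i].
  by rewrite takel_cat // size_drop leq_subRL // ltnW.
have /eqP-> : n == 0.
  by rewrite -leqn0 -(leq_add2l i) addn0 (leq_trans le_s ge_i).
by rewrite !take0.
Qed.

Lemma drop_size_addn_cat j s t : drop (size s + j) (s ++ t) = drop j t.
Proof. by rewrite addnC -drop_drop drop_size_cat. Qed.

Lemma take_size_drop_cat i s t : i <= size s -> size s = size t ->
  take (size s) (drop i (s ++ t)) = drop i s ++ take i t.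
Proof.
move=> le_i eq_size; rewrite drop_cat; case: ltnP => [lt_i | ge_i].
  by rewrite take_cat size_drop ltnNge leq_subr /= subKn.
have -> : i = size s by apply/eqP; rewrite eqn_leq le_i.
by rewrite subnn drop0 drop_size.
Qed.

End Windows.

Section Differ.
Variable V : finType.
Implicit Types (a b s : seq V) (u v : V).

Lemma eqseq_count_zip a b : (a == b) =
  (size a == size b) && (count (fun p : V * V => p.1 != p.2) (zip a b) == 0).
Proof.
elim: a b => [|u a IHa] [|v b] //=.
by rewrite eqseq_cons eqSS addn_eq0 eqb0 negbK IHa andbCA.
Qed.

Lemma differ_le1_refl a : differ_le1 a a.
Proof. by move: (eqxx a); rewrite eqseq_count_zip /differ_le1 => /andP[-> /eqP ->]. Qed.

Lemma differ_le1_cons u v a b :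
  differ_le1 (u :: a) (v :: b) = (u == v) && differ_le1 a b || (a == b).
Proof.
have [-> | neq_uv] := eqVneq u v.
  rewrite {1}/differ_le1 /= eqSS eqxx add0n -/(differ_le1 a b).
  by have [<- | _] := eqVneq a b; rewrite ?differ_le1_refl ?orbF.
by rewrite eqseq_count_zip /differ_le1 /= eqSS neq_uv add1n ltnS leqn0.
Qed.

Lemma differ_le1_rcons u v a b :
  differ_le1 (rcons a u) (rcons b v) = differ_le1 (u :: a) (v :: b).
Proof.
rewrite /differ_le1 !size_rcons /= eqSS.
have [eq_size | _] := eqVneq (size a) (size b) => //=.
by rewrite zip_rcons // -cats1 count_cat /= addn0 addnC.
Qed.

Lemma differ_le1_cyc a b : differ_le1 a b -> differ_le1 (cyc a) (cyc b).
Proof.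
case/lastP: a => [|a u]; case/lastP: b => [|b v] //; last first.
  by rewrite differ_le1_rcons /cyc !rotr1_rcons.
all: by rewrite /differ_le1 ?size_rcons.
Qed.

Lemma differ_le1_take_drop a b i :
  differ_le1 a b -> take i a = take i b \/ drop i a = drop i b.
Proof.
elim: a b i => [|u a IHa] [|v b] [|i] //=; try by left.
rewrite differ_le1_cons => /orP[/andP[/eqP-> /(IHa _ i)[->|->]] | /eqP->]; by [left | right].
Qed.

Lemma differ_le1_window_cyc n i s : n < size (drop i.+1 s) ->
  differ_le1 (take n.+1 (drop i s)) (cyc (take n.+1 (drop i.+1 s))).
Proof.
have -> : drop i.+1 s = behead (drop i s) by rewrite -drop1 drop_drop add1n.
case: (drop i s) => [|u t] //= lt_nt.
by rewrite (take_nth u lt_nt) /cyc rotr1_rcons differ_le1_cons eqxx orbT.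
Qed.

End Differ.

Section TightConnectivity.
Variables (V : finType) (r : nat) (E : {set {set V}}).
Implicit Types (a b c : seq V).

Local Notation tconn := (tightly_connected r E).

Lemma size_oedge a : oedge r E a -> size a = r.
Proof. by case/andP=> /eqP. Qed.

Lemma oedge_perm a b : perm_eq a b -> oedge r E a -> oedge r E b.
Proof.
move=> perm_ab; rewrite /oedge (perm_size perm_ab).
by have -> : [set v in b] = [set v in a] by apply/setP => v; rewrite !inE (perm_mem perm_ab).
Qed.

Lemma oedge_rot n a : oedge r E a -> oedge r E (rot n a).
Proof. by apply: oedge_perm; rewrite perm_sym perm_rot. Qed.

Lemma oedge_cyc a : oedge r E a -> oedge r E (cyc a).
Proof. by apply: oedge_perm; rewrite perm_sym perm_rotr. Qed.

Lemma oedge_iter_cyc n a : oedge r E a -> oedge r E (iter n (@cyc V) a).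
Proof. by elim: n => //= n IHn /IHn /oedge_cyc. Qed.

Lemma tightly_connected_refl a : oedge r E a -> tconn a a.
Proof. by move=> Ea; exists [::]; rewrite /= Ea. Qed.

Lemma tightly_connected_step a b :
  oedge r E a -> oedge r E b -> differ_le1 a b -> tconn a b.
Proof. by move=> Ea Eb ab; exists [:: b]; rewrite /= Ea Eb ab. Qed.

Lemma tightly_connected_trans a b c : tconn a b -> tconn b c -> tconn a c.
Proof.
move=> [p [Ep ab <-]] [q [Eq bc <-]]; exists (p ++ q); split.
- by rewrite -cat_cons all_cat Ep; case/andP: Eq.
- by rewrite cat_path ab.
- exact: last_cat.
Qed.

Lemma tightly_connected_cyc a b : tconn a b -> tconn (cyc a) (cyc b).
Proof.
move=> [p [Ep ab <-]]; exists (map (@cyc V) p); split; last exact: last_map.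
- by rewrite -map_cons all_map; apply: sub_all Ep => c /oedge_cyc.
- by rewrite path_map; apply: sub_path ab => c d /differ_le1_cyc.
Qed.

Lemma tightly_connected_iter_cyc n a b :
  tconn a b -> tconn (iter n (@cyc V) a) (iter n (@cyc V) b).
Proof. by elim: n => //= n IHn /IHn /tightly_connected_cyc. Qed.

End TightConnectivity.

Section TightWalks.
Variables (V : finType) (r : nat) (E : {set {set V}}).
Hypothesis r_gt0 : 0 < r.
Implicit Types (a b c : seq V).

Local Notation walk := (tight_walk r E).
Local Notation tconn := (tightly_connected r E).

Lemma tight_walk0 a : oedge r E a -> walk 0 a a.
Proof.
move=> Ea; have size_a := size_oedge Ea.
have take_a : take r a = a by rewrite take_oversize ?size_a.
exists a; rewrite drop0 take_a; split=> // i.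
by rewrite leqn0 => /eqP->; rewrite drop0 take_a.
Qed.

Lemma tight_walk_cat l1 l2 a b c : walk l1 a b -> walk l2 b c -> walk (l1 + l2) a c.
Proof.
move=> [s1 [size1 win1 <- end1]] [s2 [size2 win2 start2 <-]].
set p := take l1 s1.
have size_p : size p = l1 by rewrite size_takel // size1 leq_addr.
have def_s1 : s1 = p ++ b.
  by rewrite -end1 take_oversize ?cat_take_drop // size_drop size1 addKn.
have def_s2 : s2 = b ++ drop r s2 by rewrite -start2 cat_take_drop.
have def_s : p ++ s2 = s1 ++ drop r s2 by rewrite {1}def_s2 catA -def_s1.
exists (p ++ s2); split.
- by rewrite size_cat size_p size2 addnA.
- move=> i le_i; case: (leqP i l1) => [le_il1 | lt_l1i].
    by rewrite def_s take_drop_catl ?win1 // size1 leq_add2r.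
  rewrite -(subnKC (ltnW lt_l1i)) -size_p drop_size_addn_cat win2 //.
  by rewrite size_p leq_subLR.
- by rewrite def_s takel_cat // size1 leq_addl.
- by rewrite -size_p drop_size_addn_cat.
Qed.

Lemma tight_walk_cyc a : oedge r E a -> walk 1 (cyc a) a.
Proof.
move=> Ea; have size_a := size_oedge Ea.
case/lastP: a Ea size_a => [|a v] Ea size_a; first by move: r_gt0; rewrite -size_a.
rewrite size_rcons in size_a.
have take_cyc : take r (v :: rcons a v) = v :: a.
  by rewrite -size_a -rcons_cons -cats1 take_size_cat.
have take_a : take r (rcons a v) = rcons a v by rewrite take_oversize ?size_rcons ?size_a.
exists (v :: rcons a v); split.
- by rewrite /= size_rcons size_a add1n.
- case=> [_ | [_ | //]]; rewrite /= ?drop0 ?take_cyc ?take_a //.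
  by rewrite -[v :: a]rotr1_rcons; apply: oedge_cyc.
- by rewrite take_cyc /cyc rotr1_rcons.
- by rewrite drop1 take_a.
Qed.

Lemma tight_walk_iter_cyc k a : oedge r E a -> walk k (iter k (@cyc V) a) a.
Proof.
move=> Ea; elim: k => [|k IHk]; first exact: tight_walk0.
by rewrite iterS -add1n; apply: tight_walk_cat IHk; apply/tight_walk_cyc/oedge_iter_cyc.
Qed.

Lemma tight_walk_differ_le1 a b :
  oedge r E a -> oedge r E b -> differ_le1 a b -> walk r a b.
Proof.
move=> Ea Eb ab; have size_a := size_oedge Ea; have size_b := size_oedge Eb.
exists (a ++ b); split.
- by rewrite size_cat size_a size_b.
- move=> i le_i; rewrite -[X in take X _]size_a take_size_drop_cat ?size_a ?size_b //.
  by case: (differ_le1_take_drop i ab) => [<- | ->]; apply: oedge_rot.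
- by rewrite -size_a take_size_cat.
- by rewrite (drop_size_cat _ size_a) take_oversize ?size_b.
Qed.

Lemma tight_walk_of_tightly_connected a b : tconn a b -> exists n, walk (n * r) a b.
Proof.
move=> [p [Ep ab <-]]; elim: p a Ep ab => [|c p IHp] a /=.
  by rewrite andbT => Ea _; exists 0; apply: tight_walk0.
move=> /andP[Ea Ecp] /andP[ac cp]; have [n walk_n] := IHp c Ecp cp.
exists n.+1; rewrite mulSn; apply: tight_walk_cat walk_n.
by apply: tight_walk_differ_le1 => //; case/andP: Ecp.
Qed.

Lemma tightly_connected_of_tight_walk l a b : walk l a b -> tconn a (iter l (@cyc V) b).
Proof.
move=> [s [size_s win <- <-]].
suff: forall i, i <= l -> tconn (take r s) (iter i (@cyc V) (take r (drop i s))).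
  by apply.
elim=> [_ | i IHi lt_il].
  by rewrite drop0; apply: tightly_connected_refl; rewrite -[s in take r s]drop0 win.
apply: tightly_connected_trans (IHi (ltnW lt_il)) _.
rewrite iterSr; apply/tightly_connected_iter_cyc/tightly_connected_step.
- exact/win/ltnW.
- exact/oedge_cyc/win.
rewrite -(prednK r_gt0); apply: differ_le1_window_cyc.
by rewrite size_drop size_s ltn_subRL addSnnS prednK // ltn_add2r.
Qed.

End TightWalks.

Theorem proposition3p9 (V : finType) (r : nat) (E : {set {set V}})
    (k : nat) (x y : seq V) :
  (0 < r)%N -> is_rgraph r E -> oedge r E x -> oedge r E y ->
  (exists l : nat, (l = k %[mod r]) /\ tight_walk r E l x y) <->
  tightly_connected r E x (iter k (@cyc V) y).
Proof.
(* Only [y] needs to be an oriented edge: its length r is the period of [cyc]. *)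
move=> r_gt0 _ _ Ey.
have cyc_mod n : iter n (@cyc V) y = iter (n %% r) (@cyc V) y.
  by rewrite iter_cyc_mod (size_oedge Ey).
split.
- move=> [l [eq_lk walk_l]]; rewrite cyc_mod -eq_lk -cyc_mod.
  exact: (tightly_connected_of_tight_walk r_gt0 walk_l).
- move=> /tight_walk_of_tightly_connected [n walk_n].
  exists (n * r + k); split; first by rewrite modnMDl.
  exact: tight_walk_cat walk_n (tight_walk_iter_cyc r_gt0 k Ey).
Qed.
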